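(* Let $S$ be a $*$-regular semigroup, viewed as a DRC-semigroup with $D(a)=aa^\dagger$ and $R(a)=a^\dagger a$. Then for any $a\in S$: (i) $\vartheta_a$ and $\vartheta'_a$ are bijections, with $\vartheta_{a^\dagger}=\vartheta_a^{-1}$ and $\vartheta'_{a^\dagger}=(\vartheta'_a)^{-1}$; (ii) $\vartheta_{a^*}=\vartheta'_a$ and $\vartheta'_{a^*}=\vartheta_a$; (iii) $\Theta_{a^*}=\Delta_a$ and $\Delta_{a^*}=\Theta_a$.
   Context: A $*$-regular semigroup is a semigroup $S$ with an involution $a\mapsto a^*$ ($a^{**}=a$, $(ab)^*=b^*a^*$) such that each $a\in S$ has a (unique) element $a^\dagger$ (Moore–Penrose inverse) satisfying $aa^\dagger a=a$, $a^\dagger aa^\dagger=a^\dagger$, $(aa^\dagger)^*=aa^\dagger$, $(a^\dagger a)^*=a^\dagger a$. With $D(a)=aa^\dagger$, $R(a)=a^\dagger a$, $S$ is a DRC-semigroup. Let $P=\{D(a):a\in S\}$, ordered by $p\le q\iff p=pq=qp$, and $t^\downarrow=\{s\in P:s\le t\}$. For $a\in S$ define (maps written on the right) $\vartheta_a:D(a)^\downarrow\to R(a)^\downarrow$, $p\vartheta_a=R(pa)$; $\vartheta'_a:R(a)^\downarrow\to D(a)^\downarrow$, $q\vartheta'_a=D(aq)$; $\Theta_a,\Delta_a:P\to P$, $p\Theta_a=R(pa)$, $p\Delta_a=D(ap)$. *)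

Set Implicit Arguments.

(* Since the Moore-Penrose inverse
   is unique, we record it as a function [mp] satisfying the four MP equations. *)
Record StarRegSemigroup := {
  car :> Type;
  mul : car -> car -> car;
  star : car -> car;
  mp : car -> car;
  mulA : forall a b c, mul a (mul b c) = mul (mul a b) c;
  starK : forall a, star (star a) = a;
  starM : forall a b, star (mul a b) = mul (star b) (star a);
  mp1 : forall a, mul (mul a (mp a)) a = a;
  mp2 : forall a, mul (mul (mp a) a) (mp a) = mp a;
  mp3 : forall a, star (mul a (mp a)) = mul a (mp a);
  mp4 : forall a, star (mul (mp a) a) = mul (mp a) a
}.

Arguments mul {s} _ _.
Arguments star {s} _.
Arguments mp {s} _.

Section Defs.
Variable S : StarRegSemigroup.

Definition Dop (a : S) : S := mul a (mp a).
Definition Rop (a : S) : S := mul (mp a) a.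

Definition inP (p : S) : Prop := exists a : S, p = Dop a.

Definition leP (p q : S) : Prop := p = mul p q /\ p = mul q p.

Definition down (t : S) (s : S) : Prop := inP s /\ leP s t.

(* the maps, written as functions on S, with their intended domains *)
Definition theta (a : S) (p : S) : S := Rop (mul p a).    (* on D(a)^down *)
Definition theta' (a : S) (q : S) : S := Dop (mul a q).   (* on R(a)^down *)
Definition Theta (a : S) (p : S) : S := Rop (mul p a).    (* on P *)
Definition Delta (a : S) (p : S) : S := Dop (mul a p).    (* on P *)

Definition bij_on (A B : S -> Prop) (f : S -> S) : Prop :=
  (forall x, A x -> B (f x)) /\
  (forall x y, A x -> A y -> f x = f y -> x = y) /\
  (forall y, B y -> exists x, A x /\ f x = y).

Definition map_eq (A1 B1 : S -> Prop) (f : S -> S)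
                  (A2 B2 : S -> Prop) (g : S -> S) : Prop :=
  (forall x, A1 x <-> A2 x) /\ (forall x, B1 x <-> B2 x) /\
  (forall x, A1 x -> f x = g x).

Definition map_inv (A B : S -> Prop) (f : S -> S)
                   (A' B' : S -> Prop) (g : S -> S) : Prop :=
  (forall x, A' x <-> B x) /\ (forall x, B' x <-> A x) /\
  (forall x, A x -> g (f x) = x) /\ (forall y, B y -> f (g y) = y).

End Defs.

Arguments Dop {S} _.
Arguments Rop {S} _.
Arguments inP {S} _.
Arguments leP {S} _ _.
Arguments down {S} _ _.
Arguments theta {S} _ _.
Arguments theta' {S} _ _.
Arguments Theta {S} _ _.
Arguments Delta {S} _ _.
Arguments bij_on {S} _ _ _.
Arguments map_eq {S} _ _ _ _ _ _.
Arguments map_inv {S} _ _ _ _ _ _.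

(* The Moore-Penrose inverse is unique, so [mp] is an involution commuting with
   [star]; hence D(star a) = R(a) and D(mp a) = R(a).  The key fact is that a
   projection p <= D(a) is recovered from pa as p = D(pa); this gives
   theta_(mp a) (theta_a p) = p, and by symmetry theta_a and theta_(mp a) are
   mutually inverse bijections.  Since D(x) = R(star x) and projections are fixed
   by [star], theta'_a q = D(aq) = R(q (star a)) = theta_(star a) q, which gives
   (ii) and (iii) and transfers (i) from theta to theta'. *)

From Stdlib Require Import Setoid.

Section MapsOn.
Variables (S : StarRegSemigroup) (A B : S -> Prop) (f g : S -> S).

Lemma map_inv_of_cancel :
  (forall x, A x -> g (f x) = x) -> (forall y, B y -> f (g y) = y) ->
  map_inv A B f B A g.
Proof. intros fK gK. repeat split; tauto. Qed.

Lemma bij_on_of_cancel :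
  (forall x, A x -> B (f x)) -> (forall y, B y -> A (g y)) ->
  (forall x, A x -> g (f x) = x) -> (forall y, B y -> f (g y) = y) ->
  bij_on A B f.
Proof.
  intros fAB gBA fK gK. split; [exact fAB | split].
  - intros x y Ax Ay Efxy. now rewrite <- (fK x Ax), <- (fK y Ay), Efxy.
  - intros y By. exists (g y). auto.
Qed.

End MapsOn.

Section StarRegular.
Variable S : StarRegSemigroup.
Local Infix "**" := mul (at level 40, left associativity).

Definition projection (e : S) : Prop := star e = e /\ e ** e = e.

Lemma mp_uniq (a x : S) :
  a ** x ** a = a -> x ** a ** x = x ->
  star (a ** x) = a ** x -> star (x ** a) = x ** a -> x = mp a.
Proof.
  intros H1 H2 H3 H4.
  assert (Ea : star a = star a ** (a ** mp a)).
  { rewrite <- (mp3 S a), <- starM. now rewrite mp1. }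
  assert (Ea' : star a = x ** a ** star a).
  { rewrite <- H4, <- starM. now rewrite mulA, H1. }
  assert (Ex : x = x ** a ** mp a).
  { transitivity (x ** star x ** star a).
    - rewrite <- mulA, <- starM, H3, mulA. now rewrite H2.
    - rewrite Ea, !mulA, <- (mulA _ x), <- starM, H3, mulA, H2. reflexivity. }
  assert (Emp : mp a = x ** a ** mp a).
  { transitivity (star a ** star (mp a) ** mp a).
    - rewrite <- starM, mp4. now rewrite mp2.
    - rewrite Ea', <- (mulA _ (x ** a) (star a) (star (mp a))), <- starM, mp4,
        <- mulA, mp2. reflexivity. }
  now rewrite Ex, <- Emp.
Qed.

Lemma mpK (a : S) : mp (mp a) = a.
Proof. symmetry. apply mp_uniq; [apply mp2 | apply mp1 | apply mp4 | apply mp3]. Qed.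

Lemma mp_star (a : S) : mp (star a) = star (mp a).
Proof.
  symmetry. apply mp_uniq.
  - rewrite <- !starM, mulA, mp1. reflexivity.
  - rewrite <- !starM, mulA, mp2. reflexivity.
  - rewrite <- starM, starK, mp4. reflexivity.
  - rewrite <- starM, starK, mp3. reflexivity.
Qed.

Lemma mp_projection (e : S) : projection e -> mp e = e.
Proof. intros [He Hee]. symmetry. apply mp_uniq; rewrite ?Hee; auto. Qed.

Lemma projection_Dop (a : S) : projection (Dop a).
Proof. split; [apply mp3 | unfold Dop; rewrite mulA, mp1; reflexivity]. Qed.

Lemma projection_Rop (a : S) : projection (Rop a).
Proof. split; [apply mp4 | unfold Rop; rewrite mulA, mp2; reflexivity]. Qed.

Lemma inP_projection (p : S) : inP p <-> projection p.
Proof.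
  split.
  - intros [b ->]. apply projection_Dop.
  - intros Hp. exists p. unfold Dop. rewrite mp_projection by exact Hp.
    symmetry. apply Hp.
Qed.

Lemma down_projection {t p : S} : down t p -> projection p.
Proof. intros [Hp _]. now apply inP_projection. Qed.

Lemma Dop_star (a : S) : Dop (star a) = Rop a.
Proof. unfold Dop, Rop. rewrite mp_star, <- starM. apply mp4. Qed.

Lemma Rop_star (a : S) : Rop (star a) = Dop a.
Proof. unfold Dop, Rop. rewrite mp_star, <- starM. apply mp3. Qed.

Lemma Dop_mp (a : S) : Dop (mp a) = Rop a.
Proof. unfold Dop, Rop. now rewrite mpK. Qed.

Lemma Rop_mp (a : S) : Rop (mp a) = Dop a.
Proof. unfold Dop, Rop. now rewrite mpK. Qed.

Lemma leP_projection (p q : S) :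
  projection p -> projection q -> p ** q = p -> leP p q.
Proof.
  intros [Hp _] [Hq _] Epq. split; [now symmetry |].
  transitivity (star (p ** q)); [now rewrite Epq, Hp | now rewrite starM, Hp, Hq].
Qed.

Lemma Dop_mul_down (a p : S) : down (Dop a) p -> Dop (p ** a) = p.
Proof.
  intros Hdown. destruct (down_projection Hdown) as [Hp Hpp].
  destruct Hdown as [_ [Hl _]]. destruct (projection_Dop (p ** a)) as [Hd _].
  assert (Ep_left : p ** Dop (p ** a) = Dop (p ** a)).
  { unfold Dop. rewrite !mulA, Hpp. reflexivity. }
  assert (Ep_right : Dop (p ** a) ** p = Dop (p ** a)).
  { transitivity (star (p ** Dop (p ** a))); [now rewrite starM, Hd, Hp |].
    now rewrite Ep_left, Hd. }
  (* p = p D(a) = D(pa) (pa) a^dagger = D(pa) p *)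
  assert (Ep : p = Dop (p ** a) ** p).
  { transitivity (p ** a ** mp a). { rewrite <- mulA. exact Hl. }
    transitivity (Dop (p ** a) ** (p ** a) ** mp a). { unfold Dop. now rewrite mp1. }
    rewrite <- !mulA. f_equal. symmetry. exact Hl. }
  now rewrite Ep_right in Ep.
Qed.

Lemma theta_down (a p : S) : down (Dop a) p -> down (Rop a) (theta a p).
Proof.
  intros [_ [Hl _]]. split; [apply inP_projection, projection_Rop |].
  apply leP_projection; try apply projection_Rop.
  unfold theta, Rop. rewrite <- !mulA, (mulA _ a (mp a) a), (mulA _ p (a ** mp a) a).
  change (a ** mp a) with (Dop a). now rewrite <- Hl.
Qed.

Lemma theta_mpK (a p : S) : down (Dop a) p -> theta (mp a) (theta a p) = p.
Proof.
  intros Hdown. pose proof (Dop_mul_down a p Hdown) as Hpa.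
  destruct Hdown as [_ [Hl _]].
  assert (E : Rop (p ** a) ** mp a = mp (p ** a)).
  { unfold Rop. rewrite <- !mulA.
    change (p ** (a ** mp a)) with (p ** Dop a). rewrite <- Hl.
    rewrite <- Hpa at 2.
    unfold Dop. rewrite mulA. apply mp2. }
  unfold theta. rewrite E. unfold Rop. now rewrite mpK.
Qed.

Lemma theta_mp_down (a q : S) : down (Rop a) q -> down (Dop a) (theta (mp a) q).
Proof. rewrite <- (Dop_mp a), <- (Rop_mp a). apply theta_down. Qed.

Lemma theta_mpVK (a q : S) : down (Rop a) q -> theta a (theta (mp a) q) = q.
Proof. rewrite <- Dop_mp. rewrite <- (mpK a) at 2. apply theta_mpK. Qed.

Lemma theta'_theta_star (a q : S) : inP q -> theta' a q = theta (star a) q.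
Proof.
  intros Hq. destruct (proj1 (inP_projection q) Hq) as [Hqs _].
  unfold theta, theta'. now rewrite <- Rop_star, starM, Hqs.
Qed.

Lemma theta'_down (a q : S) : down (Rop a) q -> down (Dop a) (theta' a q).
Proof.
  intros Hq. rewrite theta'_theta_star by apply Hq.
  rewrite <- Rop_star. apply theta_down. now rewrite Dop_star.
Qed.

Lemma theta'_mpK (a q : S) : down (Rop a) q -> theta' (mp a) (theta' a q) = q.
Proof.
  intros Hq. pose proof (theta'_down a q Hq) as Hq'.
  rewrite (theta'_theta_star a) by apply Hq. rewrite theta'_theta_star.
  - rewrite <- mp_star. apply theta_mpK. now rewrite Dop_star.
  - rewrite <- theta'_theta_star by apply Hq. apply Hq'.
Qed.

Lemma theta'_mpVK (a p : S) : down (Dop a) p -> theta' a (theta' (mp a) p) = p.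
Proof. rewrite <- Rop_mp. rewrite <- (mpK a) at 2. apply theta'_mpK. Qed.

Lemma theta'_mp_down (a p : S) : down (Dop a) p -> down (Rop a) (theta' (mp a) p).
Proof. rewrite <- (Dop_mp a), <- (Rop_mp a). apply theta'_down. Qed.

End StarRegular.

Theorem proposition9p12 (S : StarRegSemigroup) (a : S) :
  (* (i) *)
  bij_on (down (Dop a)) (down (Rop a)) (theta a) /\
  bij_on (down (Rop a)) (down (Dop a)) (theta' a) /\
  map_inv (down (Dop a)) (down (Rop a)) (theta a)
          (down (Dop (mp a))) (down (Rop (mp a))) (theta (mp a)) /\
  map_inv (down (Rop a)) (down (Dop a)) (theta' a)
          (down (Rop (mp a))) (down (Dop (mp a))) (theta' (mp a)) /\
  (* (ii) *)
  map_eq (down (Dop (star a))) (down (Rop (star a))) (theta (star a))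
         (down (Rop a)) (down (Dop a)) (theta' a) /\
  map_eq (down (Rop (star a))) (down (Dop (star a))) (theta' (star a))
         (down (Dop a)) (down (Rop a)) (theta a) /\
  (* (iii) *)
  (forall p, inP p -> Theta (star a) p = Delta a p) /\
  (forall p, inP p -> Delta (star a) p = Theta a p).
Proof.
  rewrite Dop_mp, Rop_mp, Dop_star, Rop_star.
  assert (theta_star : forall p, inP p -> theta (star a) p = theta' a p).
  { intros p Hp. now rewrite theta'_theta_star. }
  assert (theta'_star : forall p, inP p -> theta' (star a) p = theta a p).
  { intros p Hp. now rewrite theta'_theta_star, starK. }
  split; [apply bij_on_of_cancel with (theta (mp a));
          auto using theta_down, theta_mp_down, theta_mpK, theta_mpVK |].
  split; [apply bij_on_of_cancel with (theta' (mp a));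
          auto using theta'_down, theta'_mp_down, theta'_mpK, theta'_mpVK |].
  split; [apply map_inv_of_cancel; auto using theta_mpK, theta_mpVK |].
  split; [apply map_inv_of_cancel; auto using theta'_mpK, theta'_mpVK |].
  split; [split; [| split]; [tauto | tauto | intros p [Hp _]; auto] |].
  split; [split; [| split]; [tauto | tauto | intros p [Hp _]; auto] |].
  split; [exact theta_star | exact theta'_star].
Qed.
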